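(* Let $R$ be a ring and $\sigma: P_{-1}\to P_0$ a homomorphism between projective right $R$-modules; $\sigma^+:P_0^+\to P_{-1}^+$ is then a homomorphism between injective left $R$-modules. (1) $\mathcal{T}_\sigma=\mathcal{C}_{\sigma^+}$, and a left $R$-module $X$ belongs to $\mathcal{C}_{\sigma^+}$ if and only if $X^+\in\mathcal{D}_\sigma$. (2) If $\sigma$ is of finite type, then a right $R$-module $Y$ belongs to $\mathcal{D}_\sigma$ if and only if $Y^+\in\mathcal{C}_{\sigma^+}$ (so $\mathcal{D}_\sigma$ and $\mathcal{C}_{\sigma^+}$ are dual definable categories). (3) A homomorphism $\lambda$ between injective left $R$-modules is of cofinite type if and only if there is a homomorphism $\sigma$ between projective right $R$-modules, of finite type, such that $\mathcal{C}_\lambda=\mathcal{C}_{\sigma^+}$.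
   Context: $M^+=\operatorname{Hom}_{\mathbb Z}(M,\mathbb{Q}/\mathbb{Z})$ denotes the character dual. For a homomorphism $\alpha: A\to B$ of right $R$-modules, $\mathcal{D}_\alpha=\{X\in\text{Mod-}R \mid \operatorname{Hom}_R(\alpha,X)\text{ is surjective}\}$; $\alpha$ (with $A,B$ projective) is of finite type if there are homomorphisms $\sigma_i$ ($i\in I$) between finitely generated projective right modules with $\mathcal{D}_\alpha=\bigcap_i\mathcal{D}_{\sigma_i}$. For a homomorphism $\lambda:E_0\to E_1$ of left $R$-modules, $\mathcal{C}_\lambda=\{X\in R\text{-Mod}\mid \operatorname{Hom}_R(X,\lambda):\operatorname{Hom}_R(X,E_0)\to\operatorname{Hom}_R(X,E_1)\text{ is surjective}\}$. For a homomorphism $\sigma$ of projective right modules, $\mathcal{T}_\sigma=\{X\in R\text{-Mod}\mid \sigma\otimes_R X\text{ is injective}\}$. A homomorphism $\lambda$ between injective left modules is of cofinite type if there is a set of homomorphisms $\sigma_i$ ($i\in I$) between finitely generated projective right $R$-modules with $\mathcal{C}_\lambda=\bigcap_{i\in I}\mathcal{T}_{\sigma_i}$. *)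

From HB Require Import structures.
From mathcomp Require Import all_boot all_order all_algebra.
From mathcomp Require Import boolp.
Set Implicit Arguments. Unset Strict Implicit. Unset Printing Implicit Defensive.
Import Order.TTheory GRing.Theory Num.Theory.
Local Open Scope ring_scope.

(* The abelian group Q/Z, represented by rationals in [0,1).                 *)

Definition frac (r : rat) : rat := r - (Num.floor r)%:~R.

Lemma frac_ge0 r : 0 <= frac r.
Proof. by rewrite /frac subr_ge0 floor_le. Qed.

Lemma frac_lt1 r : frac r < 1.
Proof. by rewrite /frac ltrBlDr addrC -[1]/(1%:~R) -intrD floorD1_gt. Qed.

Lemma frac_id r : 0 <= r < 1 -> frac r = r.
Proof.
move=> /andP[r0 r1]; rewrite /frac.
have -> : Num.floor r = 0 by apply: floor_def; rewrite r0 add0r r1.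
by rewrite subr0.
Qed.

Lemma fracDz r (z : int) : frac (r + z%:~R) = frac r.
Proof.
rewrite /frac floorDrz ?intr_int // intrKfloor intrD.
by rewrite opprD addrACA subrr addr0.
Qed.

Lemma frac_fracl a b : frac (frac a + b) = frac (a + b).
Proof.
have -> : frac a + b = (a + b) + (- Num.floor a)%:~R.
  by rewrite /frac intrN addrAC.
by rewrite fracDz.
Qed.

Lemma frac_fracr a b : frac (a + frac b) = frac (a + b).
Proof. by rewrite addrC frac_fracl addrC. Qed.

Definition QZ := {r : rat | 0 <= r < 1}.

Definition qz_of (r : rat) : QZ :=
  exist _ (frac r) (introT andP (conj (frac_ge0 r) (frac_lt1 r))).

Definition qz0 : QZ := qz_of 0.
Definition qzopp (a : QZ) : QZ := qz_of (- sval a).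
Definition qzadd (a b : QZ) : QZ := qz_of (sval a + sval b).

Lemma qz_inj (a b : QZ) : sval a = sval b -> a = b.
Proof.
case: a b => [a Ha] [b Hb] /= ab; subst b.
by rewrite (Prop_irrelevance Ha Hb).
Qed.

Lemma qz_of_val (a : QZ) : qz_of (sval a) = a.
Proof. by apply: qz_inj; rewrite /= frac_id //; case: a. Qed.

Lemma qzaddA : associative qzadd.
Proof.
move=> a b c; apply: qz_inj => /=.
by rewrite frac_fracl frac_fracr addrA.
Qed.

Lemma qzaddC : commutative qzadd.
Proof. by move=> a b; apply: qz_inj; rewrite /= addrC. Qed.

Lemma qzadd0 : left_id qz0 qzadd.
Proof.
move=> a; apply: qz_inj; rewrite /= frac_fracl add0r frac_id //; by case: a.
Qed.

Lemma qzaddN : left_inverse qz0 qzopp qzadd.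
Proof. by move=> a; apply: qz_inj; rewrite /= frac_fracl addNr. Qed.

HB.instance Definition _ := Choice.copy QZ {r : rat | 0 <= r < 1}.
HB.instance Definition _ := GRing.isZmodule.Build QZ qzaddA qzaddC qzadd0 qzaddN.

(* Modules.  A left R-module is an [lmodType R]; a right R-module is an      *)
(* [lmodType R^c] (left module over the opposite ring), with m * r written   *)
(* as [(r : R^c) *: m].  Homomorphisms are MathComp linear maps.             *)

Section Modules.
Variable S : pzRingType.

Definition projective_mod (P : lmodType S) : Prop :=
  forall (M N : lmodType S) (g : {linear M -> N}) (f : {linear P -> N}),
    (forall n : N, exists m : M, g m = n) ->
    exists h : {linear P -> M}, forall p, g (h p) = f p.

Definition injective_mod (E : lmodType S) : Prop :=
  forall (M N : lmodType S) (g : {linear M -> N}) (f : {linear M -> E}),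
    injective g ->
    exists h : {linear N -> E}, forall m, h (g m) = f m.

Definition fin_gen (M : lmodType S) : Prop :=
  exists (n : nat) (v : 'I_n -> M),
    forall m : M, exists c : 'I_n -> S, m = \sum_(i < n) c i *: v i.

Definition Dcat (A B : lmodType S) (alpha : A -> B) (X : lmodType S) : Prop :=
  forall f : {linear A -> X}, exists g : {linear B -> X},
    forall a, g (alpha a) = f a.

Definition Ccat (E0 E1 : lmodType S) (lambda : E0 -> E1) (X : lmodType S) : Prop :=
  forall g : {linear X -> E1}, exists h : {linear X -> E0},
    forall x, lambda (h x) = g x.

End Modules.

Section Ring.
Variable R : pzRingType.

Section DualDef.
Variable M : zmodType.
Record chardual := CharDual {
  cd_fun :> M -> QZ;
  cd_add : forall x y, cd_fun (x + y) = cd_fun x + cd_fun y }.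

HB.instance Definition _ := gen_eqMixin chardual.
HB.instance Definition _ := gen_choiceMixin chardual.

Lemma cd_ext (f g : chardual) : f =1 g -> f = g.
Proof.
case: f g => [f Hf] [g Hg] /= /funext fg; subst g.
by rewrite (Prop_irrelevance Hf Hg).
Qed.

Lemma cd0_add : forall x y : M, (0 : QZ) = 0 + 0. Proof. by move=> *; rewrite addr0. Qed.
Definition cd0 : chardual := CharDual cd0_add.

Lemma cdopp_add (f : chardual) :
  forall x y, - f (x + y) = - f x + - f y.
Proof. by move=> x y; rewrite cd_add opprD. Qed.
Definition cdopp (f : chardual) : chardual := CharDual (cdopp_add f).

Lemma cdadd_add (f g : chardual) :
  forall x y, f (x + y) + g (x + y) = (f x + g x) + (f y + g y).
Proof. by move=> x y; rewrite !cd_add addrACA. Qed.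
Definition cdadd (f g : chardual) : chardual := CharDual (cdadd_add f g).

Lemma cdaddA : associative cdadd.
Proof. by move=> f g h; apply: cd_ext => x /=; rewrite addrA. Qed.
Lemma cdaddC : commutative cdadd.
Proof. by move=> f g; apply: cd_ext => x /=; rewrite addrC. Qed.
Lemma cdadd0 : left_id cd0 cdadd.
Proof. by move=> f; apply: cd_ext => x /=; rewrite add0r. Qed.
Lemma cdaddN : left_inverse cd0 cdopp cdadd.
Proof. by move=> f; apply: cd_ext => x /=; rewrite addNr. Qed.

HB.instance Definition _ := GRing.isZmodule.Build chardual cdaddA cdaddC cdadd0 cdaddN.

Lemma cdcomp_add (N : zmodType) (s : {additive N -> M}) (f : chardual) :
  forall x y, f (s (x + y)) = f (s x) + f (s y).
Proof. by move=> x y; rewrite raddfD cd_add. Qed.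
End DualDef.

Definition cdcomp (N M : zmodType) (s : {additive N -> M}) (f : chardual M)
  : chardual N := CharDual (cdcomp_add s f).

Definition dualL (X : lmodType R) : Type := chardual X.
HB.instance Definition _ (X : lmodType R) := GRing.Zmodule.on (dualL X).

Section DualL.
Variable X : lmodType R.
Lemma scL_add (r : R^c) (f : dualL X) :
  forall x y : X, f ((r : R) *: (x + y)) = f ((r : R) *: x) + f ((r : R) *: y).
Proof. by move=> x y; rewrite scalerDr cd_add. Qed.
Definition scL (r : R^c) (f : dualL X) : dualL X := CharDual (scL_add r f).
Lemma scLA a b (f : dualL X) : scL a (scL b f) = scL (a * b) f.
Proof. by apply: cd_ext => x /=; rewrite scalerA. Qed.
Lemma scL1 : left_id 1 scL.
Proof. by move=> f; apply: cd_ext => x /=; rewrite scale1r. Qed.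
Lemma scLDr : right_distributive scL +%R.
Proof. by move=> a f g; apply: cd_ext. Qed.
Lemma scLDl (f : dualL X) : {morph scL^~ f : a b / a + b}.
Proof. by move=> a b; apply: cd_ext => x /=; rewrite scalerDl cd_add. Qed.
HB.instance Definition _ :=
  GRing.Zmodule_isLmodule.Build R^c (dualL X) scLA scL1 scLDr scLDl.
End DualL.

Definition dualR (Y : lmodType R^c) : Type := chardual Y.
HB.instance Definition _ (Y : lmodType R^c) := GRing.Zmodule.on (dualR Y).

Section DualR.
Variable Y : lmodType R^c.
Lemma scR_add (r : R) (f : dualR Y) :
  forall x y : Y, f ((r : R^c) *: (x + y)) = f ((r : R^c) *: x) + f ((r : R^c) *: y).
Proof. by move=> x y; rewrite scalerDr cd_add. Qed.
Definition scR (r : R) (f : dualR Y) : dualR Y := CharDual (scR_add r f).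
Lemma scRA a b (f : dualR Y) : scR a (scR b f) = scR (a * b) f.
Proof. by apply: cd_ext => x /=; rewrite scalerA. Qed.
Lemma scR1 : left_id 1 scR.
Proof. by move=> f; apply: cd_ext => x /=; rewrite scale1r. Qed.
Lemma scRDr : right_distributive scR +%R.
Proof. by move=> a f g; apply: cd_ext. Qed.
Lemma scRDl (f : dualR Y) : {morph scR^~ f : a b / a + b}.
Proof. by move=> a b; apply: cd_ext => x /=; rewrite scalerDl cd_add. Qed.
HB.instance Definition _ :=
  GRing.Zmodule_isLmodule.Build R (dualR Y) scRA scR1 scRDr scRDl.
End DualR.

Definition dualmapR (P Q : lmodType R^c) (sigma : {linear P -> Q})
  (f : dualR Q) : dualR P := cdcomp sigma f.

(* Tensor product P (x)_R X of a right module P and a left module X,         *)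
(* presented as formal sums (lists of pairs) modulo the congruence generated *)
(* by commutativity, biadditivity, R-balancedness and 0 (x) x = 0.           *)

Section Tensor.
Variables (P : lmodType R^c) (X : lmodType R).

Inductive teq : seq (P * X) -> seq (P * X) -> Prop :=
| teq_refl s : teq s s
| teq_sym s t : teq s t -> teq t s
| teq_trans s t u : teq s t -> teq t u -> teq s u
| teq_cat s1 t1 s2 t2 : teq s1 t1 -> teq s2 t2 -> teq (s1 ++ s2) (t1 ++ t2)
| teq_comm a b : teq [:: a; b] [:: b; a]
| teq_addl p p' x : teq [:: (p + p', x)] [:: (p, x); (p', x)]
| teq_addr p x x' : teq [:: (p, x + x')] [:: (p, x); (p, x')]
| teq_bal p (r : R) x : teq [:: ((r : R^c) *: p, x)] [:: (p, r *: x)]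
| teq_zero x : teq [:: (0, x)] [::].
End Tensor.

(* T_sigma : left modules X with sigma (x) X injective *)
Definition Tcat (P Q : lmodType R^c) (sigma : P -> Q) (X : lmodType R) : Prop :=
  forall s t : seq (P * X),
    teq (map (fun px => (sigma px.1, px.2)) s) (map (fun px => (sigma px.1, px.2)) t) ->
    teq s t.

Definition finite_type (A B : lmodType R^c) (alpha : A -> B) : Prop :=
  exists (I : Type) (P Q : I -> lmodType R^c) (s : forall i, {linear P i -> Q i}),
    (forall i, fin_gen (P i) /\ projective_mod (P i) /\
               fin_gen (Q i) /\ projective_mod (Q i)) /\
    (forall Y : lmodType R^c, Dcat alpha Y <-> forall i, Dcat (s i) Y).

Definition cofinite_type (E0 E1 : lmodType R) (lambda : E0 -> E1) : Prop :=
  exists (I : Type) (P Q : I -> lmodType R^c) (s : forall i, {linear P i -> Q i}),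
    (forall i, fin_gen (P i) /\ projective_mod (P i) /\
               fin_gen (Q i) /\ projective_mod (Q i)) /\
    (forall X : lmodType R, Ccat lambda X <-> forall i, Tcat (s i) X).

End Ring.

From HB Require Import structures.
From mathcomp Require Import all_boot all_order all_algebra.
From mathcomp Require Import boolp classical_sets.
Set Implicit Arguments. Unset Strict Implicit. Unset Printing Implicit Defensive.
Import GRing.Theory Num.Theory.
Local Open Scope ring_scope.

(* Everything rests on Q/Z being a divisible, hence (by Zorn's lemma) injective,
   cogenerator of abelian groups.  Characters of P (x)_R X are the same as
   R-linear maps X -> P^+ and as R-linear maps P -> X^+.  Under these
   identifications, injectivity of sigma (x) X (every character of the source
   extends along it) becomes surjectivity of Hom(X, sigma^+), which becomes
   surjectivity of Hom(sigma, X^+): this is (1); and P^+ is injective because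
   g^+ is onto whenever g is one-to-one, so P lifts along it.
   For (2), dual bases of finitely generated projectives turn Y in D_sigma
   into an inclusion between the images of two matrices acting on tuples over
   Y.  Character duality for finite tuples turns it into the reverse inclusion
   of kernels over Y^+, and then into the same image inclusion over Y^++; so
   Y is in D_sigma iff Y^++ is, i.e. iff Y^+ is in C_{sigma^+} by (1).  For (3)
   a family (sigma_i) is replaced by its direct sum, whose D is the
   intersection of the D_{sigma_i}. *)

(** * Q/Z is an injective cogenerator *)

Lemma qz_ofD a b : qz_of (a + b) = qz_of a + qz_of b.
Proof. by apply: qz_inj => /=; rewrite frac_fracl frac_fracr. Qed.

Lemma qz_ofMn a n : qz_of (a *+ n) = qz_of a *+ n.
Proof. by elim: n => [|n IH] //; rewrite !mulrS qz_ofD IH. Qed.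

Lemma qz_of_int (z : int) : qz_of z%:~R = 0.
Proof. by apply: qz_inj => /=; rewrite -(add0r z%:~R) fracDz. Qed.

Lemma qz_divisible (a : QZ) n : (0 < n)%N -> exists c : QZ, c *+ n = a.
Proof.
move=> n_gt0; exists (qz_of (sval a / n%:R)).
rewrite -qz_ofMn -[X in qz_of X]mulr_natr divfK ?qz_of_val //.
by rewrite pnatr_eq0 -lt0n.
Qed.

Lemma qz_torsion n : (1 < n)%N -> exists c : QZ, c != 0 /\ c *+ n = 0.
Proof.
move=> n_gt1; have n_gt0 : (0 < n)%N by apply: ltnW.
have nR0 : n%:R != 0 :> rat by rewrite pnatr_eq0 -lt0n.
exists (qz_of n%:R^-1); split.
  apply/eqP => /(congr1 sval) /=.
  rewrite frac_id ?frac_id ?lexx ?ltr01 //; last first.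
    by rewrite invr_ge0 ler0n invf_lt1 ?ltr0n ?ltr1n.
  by apply/eqP; rewrite invr_eq0.
by rewrite -qz_ofMn -[X in qz_of X]mulr_natr mulVf // (qz_of_int 1).
Qed.

Section PartialCharacters.
Variable G : zmodType.
Implicit Types (S : G -> Prop) (f : G -> QZ).

Definition is_subgroup S := S 0 /\ forall x y, S x -> S y -> S (x - y).
Definition additive_on S f := forall x y, S x -> S y -> f (x - y) = f x - f y.

Section SubgroupFacts.
Variables (S : G -> Prop) (HS : is_subgroup S).

Lemma subgroup0 : S 0. Proof. by case: HS. Qed.

Lemma subgroupB x y : S x -> S y -> S (x - y). Proof. by case: HS => _; apply. Qed.

Lemma subgroupN x : S x -> S (- x).
Proof. by move=> Sx; rewrite -sub0r; apply: subgroupB => //; apply: subgroup0. Qed.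

Lemma subgroupD x y : S x -> S y -> S (x + y).
Proof. by move=> Sx Sy; rewrite -[y]opprK; apply: subgroupB => //; apply: subgroupN. Qed.

Lemma subgroupMn x n : S x -> S (x *+ n).
Proof.
move=> Sx; elim: n => [|n IH]; first exact: subgroup0.
by rewrite mulrS; apply: subgroupD.
Qed.

Variables (f : G -> QZ) (Hf : additive_on S f).

Lemma additive_on0 : f 0 = 0.
Proof. by have := Hf subgroup0 subgroup0; rewrite subrr => ->; rewrite subrr. Qed.

Lemma additive_onN x : S x -> f (- x) = - f x.
Proof. by move=> Sx; rewrite -sub0r Hf ?additive_on0 ?sub0r //; apply: subgroup0. Qed.

Lemma additive_onD x y : S x -> S y -> f (x + y) = f x + f y.
Proof.
by move=> Sx Sy; rewrite -[y]opprK Hf ?additive_onN ?opprK //; apply: subgroupN.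
Qed.

Lemma additive_onMn x n : S x -> f (x *+ n) = f x *+ n.
Proof.
move=> Sx; elim: n => [|n IH]; first exact: additive_on0.
by rewrite !mulrS additive_onD ?IH //; apply: subgroupMn.
Qed.

End SubgroupFacts.

(* [c] is a legitimate value at [h] for an extension of [f] to [S + Z h]. *)
Definition cyclic_compatible S f (h : G) (c : QZ) :=
  forall k : int, S (h *~ k) -> f (h *~ k) = c *~ k.

Lemma extend_partial_char1 S f h c :
  is_subgroup S -> additive_on S f -> cyclic_compatible S f h c ->
  exists S' f', [/\ is_subgroup S', additive_on S' f', (forall x, S x -> S' x),
    (forall x, S x -> f' x = f x) & S' h /\ f' h = c].
Proof.
move=> HS Hf Hc.
have well_defined s s' k k' : S s -> S s' -> s + h *~ k = s' + h *~ k' ->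
    f s + c *~ k = f s' + c *~ k'.
  move=> Ss Ss' E.
  have E2 : s - s' = h *~ (k' - k).
    rewrite mulrzBr; apply/eqP.
    by rewrite -subr_eq0 opprB addrACA -opprD E subrr.
  have : f (s - s') = c *~ (k' - k) by rewrite E2 Hc // -E2; apply: subgroupB.
  rewrite Hf // mulrzBr => Hfs.
  by apply/eqP; rewrite -subr_eq0 opprD addrACA Hfs addrA subrK subrr.
pose S' x := exists s k, S s /\ x = s + h *~ k.
pose f' x := match pselect (exists sk : G * int, S sk.1 /\ x = sk.1 + h *~ sk.2) with
  | left P => let sk := projT1 (cid P) in f sk.1 + c *~ sk.2
  | right _ => 0 end.
have f'E s k : S s -> f' (s + h *~ k) = f s + c *~ k.
  move=> Ss; rewrite /f'; case: pselect => [P|nP]; last by case: nP; exists (s, k).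
  case: (cid P) => [[s1 k1]] /= [Ss1 E].
  by apply: well_defined => //; rewrite E.
exists S', f'; split.
- split; first by exists 0, 0; split; [apply: subgroup0 | rewrite addr0].
  move=> _ _ [s [k [Ss ->]]] [s' [k' [Ss' ->]]].
  exists (s - s'), (k - k'); split; first exact: subgroupB.
  by rewrite mulrzBr opprD addrACA.
- move=> _ _ [s [k [Ss ->]]] [s' [k' [Ss' ->]]].
  have -> : s + h *~ k - (s' + h *~ k') = (s - s') + h *~ (k - k').
    by rewrite mulrzBr opprD addrACA.
  rewrite f'E; last exact: subgroupB.
  by rewrite !f'E // Hf // mulrzBr opprD addrACA.
- by move=> x Sx; exists x, 0; rewrite addr0.
- by move=> x Sx; have := f'E x 0 Sx; rewrite !mulr0z !addr0.
- split; first by exists 0, 1; split; [apply: subgroup0 | rewrite add0r].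
  by have := f'E 0 1 (subgroup0 HS); rewrite (additive_on0 HS Hf) !add0r.
Qed.

Lemma relative_order_cases S h : is_subgroup S ->
  (forall m, S (h *+ m) -> m = 0%N) \/
  exists n0, [/\ (0 < n0)%N, S (h *+ n0) & forall m, S (h *+ m) -> (n0 %| m)%N].
Proof.
move=> HS.
have [ex|nex] := pselect (exists n, (0 < n)%N && `[< S (h *+ n) >]); last first.
  left=> m Sm; apply/eqP; rewrite -leqn0 leqNgt; apply/negP => m_gt0.
  by apply: nex; exists m; rewrite m_gt0; apply/asboolP.
right; exists (ex_minn ex); case: ex_minnP => n0 /andP[n0_gt0 /asboolP Sn0] n0_min.
split => // m Sm; rewrite /dvdn; apply/negPn/negP => r_neq0.
have : (n0 <= m %% n0)%N.
  apply: n0_min; rewrite lt0n r_neq0 /=; apply/asboolP.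
  have -> : h *+ (m %% n0) = h *+ m - h *+ (m %/ n0 * n0).
    by rewrite {2}(divn_eq m n0) mulrnDr addrAC subrr add0r.
  by apply: subgroupB => //; rewrite mulnC mulrnA; apply: subgroupMn.
by rewrite leqNgt ltn_pmod.
Qed.

Lemma cyclic_compatible_nat S f h c : is_subgroup S -> additive_on S f ->
  (forall m, S (h *+ m) -> f (h *+ m) = c *+ m) -> cyclic_compatible S f h c.
Proof.
move=> HS Hf Hm [m|m] /= Sk; first exact: Hm.
have Sm : S (h *+ m.+1) by rewrite -[_ *+ _]opprK; apply: subgroupN.
by rewrite (additive_onN HS Hf) // Hm.
Qed.

(* Divisibility of Q/Z is exactly what makes a compatible value exist. *)
Lemma exists_cyclic_compatible S f h : is_subgroup S -> additive_on S f ->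
  exists c, cyclic_compatible S f h c.
Proof.
move=> HS Hf; have [Sh0|[n0 [n0_gt0 Sn0 n0_dvd]]] := relative_order_cases h HS.
  exists 0; apply: cyclic_compatible_nat => // m /Sh0 ->.
  by rewrite mulr0n (additive_on0 HS Hf).
have [c Hc] := qz_divisible (f (h *+ n0)) n0_gt0.
exists c; apply: cyclic_compatible_nat => // m /n0_dvd /dvdnP [q ->].
by rewrite !(mulnC q) !mulrnA (additive_onMn HS Hf) // Hc.
Qed.

Lemma exists_cyclic_compatible_nonzero S h : is_subgroup S -> ~ S h ->
  exists c, c != 0 /\ cyclic_compatible S (fun _ => 0) h c.
Proof.
move=> HS nSh.
have H0 : additive_on S (fun _ => 0) by move=> *; rewrite subr0.
have [Sh0|[n0 [n0_gt0 Sn0 n0_dvd]]] := relative_order_cases h HS.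
  have [c [c_neq0 _]] := qz_torsion (isT : (1 < 2)%N).
  exists c; split => //; apply: cyclic_compatible_nat => // m /Sh0 ->.
  by rewrite mulr0n.
have n0_gt1 : (1 < n0)%N.
  rewrite ltn_neqAle eq_sym n0_gt0 andbT.
  by apply/eqP => n0_eq1; apply: nSh; rewrite -[h]mulr1n -n0_eq1.
have [c [c_neq0 cn0]] := qz_torsion n0_gt1.
exists c; split => //; apply: cyclic_compatible_nat => // m /n0_dvd /dvdnP [q ->].
by rewrite mulnC mulrnA cn0 mul0rn.
Qed.

Section Zorn.
Variables (S0 : G -> Prop) (f0 : G -> QZ).
Hypotheses (HS0 : is_subgroup S0) (Hf0 : additive_on S0 f0).

Record partial_ext := PartialExt {
  pdom : G -> Prop;
  pfun : G -> QZ;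
  pdom_subgroup : is_subgroup pdom;
  pfun_additive : additive_on pdom pfun;
  pdom_ext : forall x, S0 x -> pdom x;
  pfun_ext : forall x, S0 x -> pfun x = f0 x }.

Definition partial_ext0 := PartialExt HS0 Hf0 (fun x Sx => Sx) (fun x _ => erefl).

Definition partial_ext_le (a b : partial_ext) : bool :=
  `[< (forall x, pdom a x -> pdom b x) /\ (forall x, pdom a x -> pfun b x = pfun a x) >].

Lemma partial_ext_chain_bound (A : set partial_ext) :
  total_on A partial_ext_le -> exists t, forall s, A s -> partial_ext_le s t.
Proof.
move=> Atot.
have [[a0 Aa0]|nA] := pselect (exists a, A a); last first.
  by exists partial_ext0 => s As; case: nA; exists s.
have common a b x y : A a -> A b -> pdom a x -> pdom b y ->
    exists c, [/\ A c, pdom c x & pdom c y].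
  move=> Aa Ab ax bY; case: (Atot a b Aa Ab) => /asboolP [ab _].
    by exists b; split => //; apply: ab.
  by exists a; split => //; apply: ab.
pose D x := exists a, A a /\ pdom a x.
pose F x := if pselect (D x) is left P then pfun (projT1 (cid P)) x else 0.
have FE a x : A a -> pdom a x -> F x = pfun a x.
  move=> Aa ax; rewrite /F; case: pselect => [P|nP]; last by case: nP; exists a.
  case: (cid P) => b [Ab bx] /=.
  by case: (Atot a b Aa Ab) => /asboolP [_ ->].
have HD : is_subgroup D.
  split; first by exists a0; split => //; apply: subgroup0 (@pdom_subgroup a0).
  move=> x y [a [Aa ax]] [b [Ab bY]]; have [c [Ac cx cy]] := common _ _ _ _ Aa Ab ax bY.
  by exists c; split => //; apply: subgroupB (@pdom_subgroup c) _ _ cx cy.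
have HF : additive_on D F.
  move=> x y [a [Aa ax]] [b [Ab bY]]; have [c [Ac cx cy]] := common _ _ _ _ Aa Ab ax bY.
  rewrite !(FE c) //; first exact: pfun_additive.
  exact: subgroupB (@pdom_subgroup c) _ _ cx cy.
have D_ext x : S0 x -> D x by exists a0; split => //; apply: pdom_ext.
have F_ext x : S0 x -> F x = f0 x.
  by move=> Sx; rewrite (FE a0) ?pfun_ext //; apply: pdom_ext.
exists (PartialExt HD HF D_ext F_ext) => s As; apply/asboolP; split => x sx /=.
  by exists s.
exact: FE.
Qed.

Lemma premaximal_partial_ext_total t :
  premaximal partial_ext_le t -> forall x, pdom t x.
Proof.
move=> tmax x; apply: contrapT => ntx.
have [c Hc] := exists_cyclic_compatible x (@pdom_subgroup t) (@pfun_additive t).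
have [S' [f' [HS' Hf' inc agr [S'x _]]]] :=
  extend_partial_char1 (@pdom_subgroup t) (@pfun_additive t) Hc.
have inc0 y : S0 y -> S' y by move=> /(@pdom_ext t) /inc.
have agr0 y : S0 y -> f' y = f0 y.
  by move=> Sy; rewrite agr ?pfun_ext //; apply: pdom_ext.
have /asboolP [/= tS' _] := tmax (PartialExt HS' Hf' inc0 agr0) (asboolT (conj inc agr)).
exact: ntx (tS' _ S'x).
Qed.

Lemma extend_partial_char :
  exists g : G -> QZ, {morph g : x y / x - y} /\ forall x, S0 x -> g x = f0 x.
Proof.
have [t tmax] : exists t, premaximal partial_ext_le t.
  apply: (ZL_preorder partial_ext0).
  - by move=> a; apply/asboolP.
  - move=> a b c /asboolP [ab1 ab2] /asboolP [bc1 bc2]; apply/asboolP; split.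
      by move=> x /ab1 /bc1.
    by move=> x ax; rewrite bc2 ?ab2 //; apply: ab1.
  - exact: partial_ext_chain_bound.
have t_total := premaximal_partial_ext_total tmax.
exists (pfun t); split => [x y|]; last exact: pfun_ext.
exact: pfun_additive (t_total x) (t_total y).
Qed.

End Zorn.

Lemma char_separates_subgroup S h : is_subgroup S -> ~ S h ->
  exists g : G -> QZ, [/\ {morph g : x y / x - y}, (forall x, S x -> g x = 0) & g h != 0].
Proof.
move=> HS nSh.
have H0 : additive_on S (fun _ => 0) by move=> *; rewrite subr0.
have [c [c_neq0 Hc]] := exists_cyclic_compatible_nonzero HS nSh.
have [S' [f' [HS' Hf' inc agr [S'h f'h]]]] := extend_partial_char1 HS H0 Hc.
have [g [Hg gf]] := extend_partial_char HS' Hf'.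
exists g; split => //; last by rewrite gf // f'h.
by move=> x Sx; rewrite gf ?agr //; apply: inc.
Qed.

End PartialCharacters.

Lemma morphB_morphD (A B : zmodType) (u : A -> B) :
  {morph u : x y / x - y} -> {morph u : x y / x + y}.
Proof.
move=> uB x y.
have u0 : u 0 = 0 by rewrite -(subrr 0) uB subrr.
have uN z : u (- z) = - u z by rewrite -sub0r uB u0 sub0r.
by have := uB x (- y); rewrite opprK => ->; rewrite uN opprK.
Qed.

Definition char_of_morphB (A : zmodType) (g : A -> QZ) (gB : {morph g : x y / x - y})
  : chardual A := CharDual (morphB_morphD gB).

Section CharacterFacts.
Variable A : zmodType.
Implicit Type chi : chardual A.

Lemma cdf0 chi : chi 0 = 0.
Proof. by apply: (addrI (chi 0)); rewrite -cd_add !addr0. Qed.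

Lemma cdfB chi x y : chi (x - y) = chi x - chi y.
Proof. by rewrite -[in chi x](subrK y x) cd_add addrK. Qed.

Lemma cdf_sum chi (I : Type) (r : seq I) (F : I -> A) :
  chi (\sum_(i <- r) F i) = \sum_(i <- r) chi (F i).
Proof.
elim: r => [|a r IH]; first by rewrite !big_nil cdf0.
by rewrite !big_cons cd_add IH.
Qed.

Lemma cd_sumE (I : Type) (r : seq I) (F : I -> chardual A) x :
  (\sum_(i <- r) F i) x = \sum_(i <- r) F i x.
Proof. by elim: r => [|a r IH]; rewrite ?big_nil // !big_cons -IH. Qed.

Lemma chardual_factor (B : zmodType) (u : A -> B) chi :
  {morph u : x y / x - y} -> (forall a, u a = 0 -> chi a = 0) ->
  exists psi : chardual B, forall a, psi (u a) = chi a.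
Proof.
move=> uB chi_ker.
pose S0 (y : B) := exists a, u a = y.
pose f0 (y : B) := if pselect (S0 y) is left P then chi (projT1 (cid P)) else 0.
have f0E a : f0 (u a) = chi a.
  rewrite /f0; case: pselect => [P|nP]; last by case: nP; exists a.
  case: (cid P) => a' /= ua'.
  by apply/eqP; rewrite -subr_eq0 -cdfB chi_ker // uB ua' subrr.
have HS : is_subgroup S0.
  split; first by exists 0; rewrite -(subrr (0 : A)) uB subrr.
  by move=> _ _ [a <-] [b <-]; exists (a - b); rewrite uB.
have Hf : additive_on S0 f0 by move=> _ _ [a <-] [b <-]; rewrite -uB !f0E cdfB.
have [g [gB gf]] := extend_partial_char HS Hf.
by exists (char_of_morphB gB) => a /=; rewrite gf ?f0E //; exists a.
Qed.

Lemma chardual_extend (B : zmodType) (u : A -> B) chi :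
  {morph u : x y / x - y} -> injective u ->
  exists psi : chardual B, forall a, psi (u a) = chi a.
Proof.
move=> uB u_inj; apply: chardual_factor => // a ua0.
have u0 : u 0 = 0 by rewrite -(subrr (0 : A)) uB subrr.
by rewrite (u_inj a 0) ?cdf0 // ua0 u0.
Qed.

Lemma chardual_separates (x : A) : x != 0 -> exists chi, chi x != 0.
Proof.
move=> x_neq0.
have HS : is_subgroup (fun y : A => y = 0) by split => // a b -> ->; rewrite subrr.
have [g [gB _ gx]] := char_separates_subgroup HS (fun E => negP x_neq0 (introT eqP E)).
by exists (char_of_morphB gB).
Qed.

End CharacterFacts.

(** * Character duality for finite tuples *)

Section TupleDuality.
Variable U : zmodType.
Local Notation tuple k := {ffun 'I_k -> U}.
Local Notation ctuple k := {ffun 'I_k -> chardual U}.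

(* The character duality (U^k)^+ = (U^+)^k. *)
Lemma tuple_char_add k (phi : ctuple k) :
  forall y z : tuple k,
    \sum_i phi i ((y + z) i) = \sum_i phi i (y i) + \sum_i phi i (z i).
Proof.
by move=> y z; rewrite -big_split; apply: eq_bigr => i _; rewrite ffunE cd_add.
Qed.

Definition tuple_char k (phi : ctuple k) : chardual (tuple k) :=
  CharDual (tuple_char_add phi).

Lemma tuple_charE k phi (y : tuple k) : tuple_char phi y = \sum_i phi i (y i).
Proof. by []. Qed.

Lemma tuple_char0 k (y : tuple k) : tuple_char 0 y = 0.
Proof. by rewrite tuple_charE big1 // => i _; rewrite ffunE. Qed.

Definition unit_tuple k (i : 'I_k) (u : U) : tuple k :=
  [ffun j => if j == i then u else 0].

Lemma unit_tupleD k (i : 'I_k) u v :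
  unit_tuple i (u + v) = unit_tuple i u + unit_tuple i v.
Proof. by apply/ffunP => j; rewrite !ffunE; case: ifP; rewrite ?addr0. Qed.

Lemma tuple_char_unit k phi (i : 'I_k) u : tuple_char phi (unit_tuple i u) = phi i u.
Proof.
rewrite tuple_charE (bigD1 i) //= big1 ?addr0; first by rewrite ffunE eqxx.
by move=> j ji; rewrite ffunE (negbTE ji) cdf0.
Qed.

Lemma tuple_char_inj k (phi1 phi2 : ctuple k) :
  tuple_char phi1 =1 tuple_char phi2 -> phi1 = phi2.
Proof.
by move=> E; apply/ffunP => i; apply: cd_ext => u; rewrite -!tuple_char_unit E.
Qed.

Lemma tuple_sum_unit k (y : tuple k) : y = \sum_i unit_tuple i (y i).
Proof.
apply/ffunP => j; rewrite sum_ffunE (bigD1 j) //= big1 ?addr0 ?ffunE ?eqxx //.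
by move=> i ij; rewrite ffunE eq_sym (negbTE ij).
Qed.

Lemma tuple_char_surj k (chi : chardual (tuple k)) :
  exists phi, chi =1 tuple_char phi.
Proof.
have chi_unitD (i : 'I_k) u v :
    chi (unit_tuple i (u + v)) = chi (unit_tuple i u) + chi (unit_tuple i v).
  by rewrite unit_tupleD cd_add.
exists [ffun i => CharDual (chi_unitD i)] => y.
rewrite tuple_charE {1}(tuple_sum_unit y) cdf_sum.
by apply: eq_bigr => i _; rewrite ffunE.
Qed.

Definition char_adjoint a b (f : tuple a -> tuple b) (f' : ctuple b -> ctuple a) :=
  forall phi y, tuple_char phi (f y) = tuple_char (f' phi) y.

Section Adjoints.
Variables (a b c : nat).

Lemma image_sub_iff_adjoint_ker (f : tuple a -> tuple b) (g : tuple c -> tuple b) f' g' :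
  {morph g : x y / x - y} -> char_adjoint f f' -> char_adjoint g g' ->
  (forall y, exists z, f y = g z) <-> (forall phi, g' phi = 0 -> f' phi = 0).
Proof.
move=> gB f_adj g_adj; split.
  move=> fg phi g'phi0; apply: tuple_char_inj => y.
  by rewrite -f_adj; have [z ->] := fg y; rewrite g_adj g'phi0 !tuple_char0.
move=> fg y; apply: contrapT => nex.
pose S (w : tuple b) := exists z, w = g z.
have HS : is_subgroup S.
  split; first by exists 0; rewrite -(subrr (0 : tuple c)) gB subrr.
  by move=> _ _ [z ->] [z' ->]; exists (z - z'); rewrite gB.
have nSfy : ~ S (f y) by move=> [z E]; apply: nex; exists z.
have [h [hB h0 hfy]] := char_separates_subgroup HS nSfy.
have [phi Hphi] := tuple_char_surj (char_of_morphB hB).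
have g'phi0 : g' phi = 0.
  by apply: tuple_char_inj => z; rewrite -g_adj -Hphi tuple_char0 /= h0 //; exists z.
move: hfy; rewrite -[h (f y)]/(char_of_morphB hB (f y)) Hphi.
by rewrite f_adj fg // tuple_char0 eqxx.
Qed.

Lemma ker_sub_iff_adjoint_image (f : tuple a -> tuple b) (g : tuple a -> tuple c) f' g' :
  {morph f : x y / x - y} -> {morph g : x y / x - y} ->
  char_adjoint f f' -> char_adjoint g g' ->
  (forall y, f y = 0 -> g y = 0) <-> (forall phi, exists phi', g' phi = f' phi').
Proof.
move=> fB gB f_adj g_adj; split; last first.
  move=> fg y fy0; apply/eqP; apply: contraT => gy_neq0.
  have [chi chi_gy] := chardual_separates gy_neq0.
  have [phi Hphi] := tuple_char_surj chi; have [phi' E] := fg phi.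
  by move: chi_gy; rewrite Hphi g_adj E -f_adj fy0 cdf0 eqxx.
move=> fg phi.
have phi_gB : {morph (fun y => tuple_char phi (g y)) : x y / x - y}.
  by move=> x y; rewrite gB cdfB.
have phi_g_ker y : f y = 0 -> char_of_morphB phi_gB y = 0.
  by move=> /fg gy0; rewrite -[LHS]/(tuple_char phi (g y)) gy0 cdf0.
have [psi Hpsi] := chardual_factor fB phi_g_ker.
have [phi' Hphi'] := tuple_char_surj psi.
exists phi'; apply: tuple_char_inj => y.
by rewrite -g_adj -f_adj -Hphi' Hpsi.
Qed.

End Adjoints.
End TupleDuality.

(** * Hom and character duals *)

Definition mkLinear (S : pzRingType) (U V : lmodType S) (f : U -> V) (fL : linear f)
  : {linear U -> V} := HB.pack f (GRing.isLinear.Build S U V *:%R f fL).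

Section Ring.
Variable R : pzRingType.

(* Hom_R(X, P^+) = Hom_Z(P (x)_R X, Q/Z) = Hom_R(P, X^+). *)
Section Flip.
Variables (X : lmodType R) (P : lmodType R^c).

Lemma flip_dualL_add (g : {linear X -> dualR P}) (p : P) :
  forall x y : X, g (x + y) p = g x p + g y p.
Proof. by move=> x y; rewrite linearD. Qed.

Definition flip_dualL_fun (g : {linear X -> dualR P}) (p : P) : dualL X :=
  CharDual (flip_dualL_add g p).

Lemma flip_dualL_lin (g : {linear X -> dualR P}) : linear (flip_dualL_fun g).
Proof.
move=> r p q; apply: cd_ext => x /=.
by rewrite cd_add; have -> : g x (r *: p) = g ((r : R) *: x) p by rewrite linearZ.
Qed.

Definition flip_dualL g := mkLinear (flip_dualL_lin g).

Lemma flip_dualLE g p x : flip_dualL g p x = g x p. Proof. by []. Qed.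

Lemma flip_dualR_add (f : {linear P -> dualL X}) (x : X) :
  forall p q : P, f (p + q) x = f p x + f q x.
Proof. by move=> p q; rewrite linearD. Qed.

Definition flip_dualR_fun (f : {linear P -> dualL X}) (x : X) : dualR P :=
  CharDual (flip_dualR_add f x).

Lemma flip_dualR_lin (f : {linear P -> dualL X}) : linear (flip_dualR_fun f).
Proof.
move=> r x y; apply: cd_ext => p /=.
by rewrite cd_add; have -> : f p (r *: x) = f ((r : R^c) *: p) x by rewrite linearZ.
Qed.

Definition flip_dualR f := mkLinear (flip_dualR_lin f).

Lemma flip_dualRE f x p : flip_dualR f x p = f p x. Proof. by []. Qed.

End Flip.

Lemma Ccat_dualmapR_Dcat_dualL (P Q : lmodType R^c) (sigma : {linear P -> Q})
    (X : lmodType R) :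
  Ccat (dualmapR sigma) X <-> Dcat sigma (dualL X).
Proof.
split=> [XC f | XD g].
  have [h Hh] := XC (flip_dualR f).
  exists (flip_dualL h) => p; apply: cd_ext => x.
  by rewrite flip_dualLE -[h x (sigma p)]/(dualmapR sigma (h x) p) Hh.
have [k Hk] := XD (flip_dualL g).
exists (flip_dualR k) => x; apply: cd_ext => p.
by rewrite -[dualmapR sigma _ p]/(flip_dualR k x (sigma p)) flip_dualRE Hk.
Qed.

Section DualmapL.
Variables (M N : lmodType R) (g : {linear M -> N}).

Lemma dualmapL_add (psi : dualL N) :
  forall x y : M, psi (g (x + y)) = psi (g x) + psi (g y).
Proof. by move=> x y; rewrite linearD cd_add. Qed.

Definition dualmapL_fun (psi : dualL N) : dualL M := CharDual (dualmapL_add psi).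

Lemma dualmapL_lin : linear dualmapL_fun.
Proof. by move=> r p q; apply: cd_ext => x /=; rewrite linearZ. Qed.

Definition dualmapL := mkLinear dualmapL_lin.

Lemma dualmapLE psi x : dualmapL psi x = psi (g x). Proof. by []. Qed.

End DualmapL.

(* A monomorphism g gives an epimorphism g^+, along which P lifts; flip back. *)
Lemma dualR_injective (P : lmodType R^c) : projective_mod P -> injective_mod (dualR P).
Proof.
move=> P_proj M N g f g_inj.
have g_dual_surj (phi : dualL M) : exists psi : dualL N, dualmapL g psi = phi.
  have [psi Hpsi] := chardual_extend phi (raddfB g) g_inj.
  by exists psi; apply: cd_ext => x; rewrite dualmapLE Hpsi.
have [h Hh] := P_proj _ _ (dualmapL g) (flip_dualL f) g_dual_surj.
exists (flip_dualR h) => m; apply: cd_ext => p.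
by rewrite flip_dualRE -[h p (g m)]/(dualmapL g (h p) m) Hh.
Qed.

End Ring.

(** * Tensor products *)

Section Tensor.
Variables (R : pzRingType) (P : lmodType R^c) (X : lmodType R).
Local Notation L := (seq (P * X)).

Lemma teq_cons a (s t : L) : teq s t -> teq (a :: s) (a :: t).
Proof. exact: teq_cat (teq_refl [:: a]). Qed.

Lemma teq_rot1 a (s : L) : teq (a :: s) (s ++ [:: a]).
Proof.
elim: s => [|b s IH] /=; first exact: teq_refl.
exact: teq_trans (teq_cat (teq_comm a b) (teq_refl s)) (teq_cons b IH).
Qed.

Lemma teq_catC (s t : L) : teq (s ++ t) (t ++ s).
Proof.
elim: s => [|a s IH] /=; first by rewrite cats0; exact: teq_refl.
apply: teq_trans (teq_cons a IH) _; apply: teq_trans (teq_rot1 a (t ++ s)) _.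
by rewrite -catA; exact: teq_cat (teq_refl t) (teq_sym (teq_rot1 a s)).
Qed.

Definition neg_seq (s : L) : L := map (fun px => (- px.1, px.2)) s.

Lemma teq_neg_seq (s t : L) : teq s t -> teq (neg_seq s) (neg_seq t).
Proof.
elim=> {s t} /=.
- by move=> s; apply: teq_refl.
- by move=> s t _; apply: teq_sym.
- by move=> s t u _ H1 _ H2; apply: teq_trans H1 H2.
- by move=> s1 t1 s2 t2 _ H1 _ H2; rewrite /neg_seq !map_cat; apply: teq_cat.
- by move=> a b; apply: teq_comm.
- by move=> p p' x; rewrite opprD; apply: teq_addl.
- by move=> p x x'; apply: teq_addr.
- by move=> p r x; rewrite -scalerN; apply: teq_bal.
- by move=> x; rewrite oppr0; apply: teq_zero.
Qed.

Lemma teq_neg_seq_cat (s : L) : teq (neg_seq s ++ s) [::].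
Proof.
elim: s => [|[p x] s IH] /=; first exact: teq_refl.
apply: teq_trans (teq_cons _ (teq_catC _ _)) _.
rewrite -cat1s catA -catA /=.
have Hs : teq (s ++ neg_seq s) [::] := teq_trans (teq_catC _ _) IH.
apply: teq_trans (teq_cat (teq_refl [:: (- p, x); (p, x)]) Hs) _; rewrite cats0.
by apply: teq_trans (teq_sym (teq_addl _ _ _)) _; rewrite addNr; apply: teq_zero.
Qed.

Definition tensor : Type := {C : L -> Prop | exists s, C = teq s}.
HB.instance Definition _ := gen_eqMixin tensor.
HB.instance Definition _ := gen_choiceMixin tensor.

Definition tensor_of (s : L) : tensor := exist _ (teq s) (ex_intro _ s erefl).

Lemma tensor_of_eq (s t : L) : tensor_of s = tensor_of t <-> teq s t.
Proof.
split=> [/(congr1 sval) /= E | st]; first by rewrite E; apply: teq_refl.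
apply: eq_exist; apply: funext => u; apply: propext.
by split; [apply: teq_trans (teq_sym st) | apply: teq_trans st].
Qed.

Definition tensor_repr (a : tensor) : L := projT1 (cid (svalP a)).

Lemma tensor_reprK a : tensor_of (tensor_repr a) = a.
Proof.
case: a => C HC; rewrite /tensor_repr; case: (cid _) => s /= E.
exact: eq_exist (esym E).
Qed.

Lemma tensor_of_surj (a : tensor) : exists s, a = tensor_of s.
Proof. by exists (tensor_repr a); rewrite tensor_reprK. Qed.

Lemma teq_tensor_repr s : teq (tensor_repr (tensor_of s)) s.
Proof. by apply/tensor_of_eq; rewrite tensor_reprK. Qed.

Definition tensor_add (a b : tensor) := tensor_of (tensor_repr a ++ tensor_repr b).
Definition tensor_opp (a : tensor) := tensor_of (neg_seq (tensor_repr a)).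
Definition tensor_zero := tensor_of [::].

Lemma tensor_addE s t : tensor_add (tensor_of s) (tensor_of t) = tensor_of (s ++ t).
Proof. by apply/tensor_of_eq; apply: teq_cat; apply: teq_tensor_repr. Qed.

Lemma tensor_oppE s : tensor_opp (tensor_of s) = tensor_of (neg_seq s).
Proof. by apply/tensor_of_eq; apply: teq_neg_seq; apply: teq_tensor_repr. Qed.

Lemma tensor_addA : associative tensor_add.
Proof.
move=> a b c.
case: (tensor_of_surj a) (tensor_of_surj b) (tensor_of_surj c) => [s ->] [t ->] [u ->].
by rewrite !tensor_addE catA.
Qed.

Lemma tensor_addC : commutative tensor_add.
Proof.
move=> a b; case: (tensor_of_surj a) (tensor_of_surj b) => [s ->] [t ->].
by rewrite !tensor_addE; apply/tensor_of_eq; apply: teq_catC.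
Qed.

Lemma tensor_add0 : left_id tensor_zero tensor_add.
Proof. by move=> a; case: (tensor_of_surj a) => [s ->]; rewrite tensor_addE. Qed.

Lemma tensor_addN : left_inverse tensor_zero tensor_opp tensor_add.
Proof.
move=> a; case: (tensor_of_surj a) => [s ->]; rewrite tensor_oppE tensor_addE.
by apply/tensor_of_eq; apply: teq_neg_seq_cat.
Qed.

HB.instance Definition _ :=
  GRing.isZmodule.Build tensor tensor_addA tensor_addC tensor_add0 tensor_addN.

Lemma tensor_ofD s t : tensor_of (s ++ t) = tensor_of s + tensor_of t.
Proof. by rewrite -tensor_addE. Qed.

Lemma tensor_ofN s : tensor_of (neg_seq s) = - tensor_of s.
Proof. by rewrite -tensor_oppE. Qed.

(* Characters of P (x)_R X correspond to maps X -> P^+ through this pairing. *)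
Definition pairing (g : {linear X -> dualR P}) (s : L) : QZ := \sum_(px <- s) g px.2 px.1.

Lemma pairing_teq g s t : teq s t -> pairing g s = pairing g t.
Proof.
rewrite /pairing; elim=> {s t}.
- by [].
- by move=> s t _ ->.
- by move=> s t u _ -> _ ->.
- by move=> s1 t1 s2 t2 _ E1 _ E2; rewrite !big_cat E1 E2.
- by move=> a b; rewrite !big_cons !big_nil !addr0 addrC.
- by move=> p p' x; rewrite !big_cons !big_nil /= !addr0 cd_add.
- by move=> p x x'; rewrite !big_cons !big_nil /= !addr0 linearD.
- by move=> p r x; rewrite !big_cons !big_nil /= !addr0 linearZ.
- by move=> x; rewrite big_cons big_nil /= addr0 cdf0.
Qed.

Lemma pairing_char_add g :
  forall a b, pairing g (tensor_repr (a + b))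
              = pairing g (tensor_repr a) + pairing g (tensor_repr b).
Proof.
move=> a b; case: (tensor_of_surj a) (tensor_of_surj b) => [s ->] [t ->].
by rewrite -tensor_ofD !(pairing_teq g (teq_tensor_repr _)) /pairing big_cat.
Qed.

Definition pairing_char g : chardual tensor := CharDual (pairing_char_add g).

Lemma pairing_charE g s : pairing_char g (tensor_of s) = pairing g s.
Proof. exact: pairing_teq (teq_tensor_repr s). Qed.

Section CharHom.
Variable chi : chardual tensor.

Lemma char_hom_add x : forall p q : P,
  chi (tensor_of [:: (p + q, x)])
  = chi (tensor_of [:: (p, x)]) + chi (tensor_of [:: (q, x)]).
Proof.
by move=> p q; rewrite -cd_add -tensor_ofD; congr (chi _); apply/tensor_of_eq/teq_addl.
Qed.

Definition char_hom_fun (x : X) : dualR P := CharDual (char_hom_add x).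

Lemma char_hom_lin : linear char_hom_fun.
Proof.
move=> r x y; apply: cd_ext => p /=.
have -> : tensor_of [:: (p, r *: x + y)]
          = tensor_of [:: ((r : R^c) *: p, x)] + tensor_of [:: (p, y)].
  rewrite -tensor_ofD; apply/tensor_of_eq; apply: teq_trans (teq_addr _ _ _) _.
  exact: teq_cat (teq_sym (teq_bal _ _ _)) (teq_refl _).
by rewrite cd_add.
Qed.

Definition char_hom := mkLinear char_hom_lin.

Lemma char_homE x p : char_hom x p = chi (tensor_of [:: (p, x)]). Proof. by []. Qed.

Lemma char_pairing s : chi (tensor_of s) = pairing char_hom s.
Proof.
elim: s => [|[p x] s IH]; first by rewrite /pairing big_nil; apply: cdf0.
by rewrite -cat1s tensor_ofD cd_add IH /pairing big_cons.
Qed.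

End CharHom.
End Tensor.

Section TensorMap.
Variables (R : pzRingType) (P Q : lmodType R^c) (sigma : {linear P -> Q}).
Variable X : lmodType R.

Definition map_left (s : seq (P * X)) : seq (Q * X) :=
  map (fun px => (sigma px.1, px.2)) s.

Lemma teq_map_left s t : teq s t -> teq (map_left s) (map_left t).
Proof.
elim=> {s t} /=.
- by move=> s; apply: teq_refl.
- by move=> s t _; apply: teq_sym.
- by move=> s t u _ H1 _ H2; apply: teq_trans H1 H2.
- by move=> s1 t1 s2 t2 _ H1 _ H2; rewrite /map_left !map_cat; apply: teq_cat.
- by move=> a b; apply: teq_comm.
- by move=> p p' x; rewrite linearD; apply: teq_addl.
- by move=> p x x'; apply: teq_addr.
- by move=> p r x; rewrite linearZ; apply: teq_bal.
- by move=> x; rewrite linear0; apply: teq_zero.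
Qed.

Definition tensor_map (a : tensor P X) : tensor Q X :=
  tensor_of (map_left (tensor_repr a)).

Lemma tensor_mapE s : tensor_map (tensor_of s) = tensor_of (map_left s).
Proof. by apply/tensor_of_eq; apply: teq_map_left; apply: teq_tensor_repr. Qed.

Lemma tensor_mapB : {morph tensor_map : a b / a - b}.
Proof.
move=> a b; case: (tensor_of_surj a) (tensor_of_surj b) => [s ->] [t ->].
rewrite -tensor_ofN -tensor_ofD !tensor_mapE /map_left map_cat -map_comp.
rewrite tensor_ofD -tensor_ofN /neg_seq -map_comp.
by congr (_ + tensor_of _); apply: eq_map => -[p x] /=; rewrite linearN.
Qed.

Lemma pairing_map_left (g : {linear X -> dualR P}) (h : {linear X -> dualR Q}) s :
  (forall x, dualmapR sigma (h x) = g x) -> pairing h (map_left s) = pairing g s.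
Proof.
move=> hg; rewrite /pairing /map_left big_map.
by apply: eq_bigr => -[p x] _ /=; rewrite -(hg x).
Qed.

(* sigma (x) X is injective iff every character of its source extends along it,
   which under the pairing is exactly the lifting property defining C_{sigma^+}. *)
Lemma Tcat_Ccat_dualmapR : Tcat sigma X <-> Ccat (dualmapR sigma) X.
Proof.
split=> [XT g | XC s t st].
  have map_inj : injective tensor_map.
    move=> a b; case: (tensor_of_surj a) (tensor_of_surj b) => [s ->] [t ->].
    by rewrite !tensor_mapE => /tensor_of_eq /XT /tensor_of_eq.
  have [psi Hpsi] := chardual_extend (pairing_char g) tensor_mapB map_inj.
  exists (char_hom psi) => x; apply: cd_ext => p.
  rewrite -[dualmapR sigma _ p]/(char_hom psi x (sigma p)) char_homE.
  rewrite -[[:: (sigma p, x)]]/(map_left [:: (p, x)]) -tensor_mapE Hpsi.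
  by rewrite pairing_charE /pairing big_seq1.
apply: contrapT => nst.
have st_neq0 : tensor_of s - tensor_of t != 0.
  by rewrite subr_eq0; apply/negP => /eqP /tensor_of_eq.
have [chi chi_st] := chardual_separates st_neq0.
have [h Hh] := XC (char_hom chi).
move: chi_st; rewrite cdfB !char_pairing -!(pairing_map_left _ Hh).
by rewrite (pairing_teq h st) subrr eqxx.
Qed.

End TensorMap.

(** * Finite presentations *)

Section Presentations.
Variable R : pzRingType.
Local Notation tuple V k := {ffun 'I_k -> V}.

Definition mx_actL (X : lmodType R) a b (M : 'I_a -> 'I_b -> R) (v : tuple X b)
  : tuple X a := [ffun i => \sum_j M i j *: v j].

Definition mx_actR (Y : lmodType R^c) a b (M : 'I_a -> 'I_b -> R) (v : tuple Y b)
  : tuple Y a := [ffun i => \sum_j (M i j : R^c) *: v j].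

Definition mx_tr a b (M : 'I_a -> 'I_b -> R) : 'I_b -> 'I_a -> R := fun j i => M i j.

Lemma mx_actLB (X : lmodType R) a b M : {morph @mx_actL X a b M : x y / x - y}.
Proof.
move=> x y; apply/ffunP => i; rewrite !ffunE -sumrB.
by apply: eq_bigr => j _; rewrite !ffunE scalerBr.
Qed.

Lemma mx_actRB (Y : lmodType R^c) a b M : {morph @mx_actR Y a b M : x y / x - y}.
Proof.
move=> x y; apply/ffunP => i; rewrite !ffunE -sumrB.
by apply: eq_bigr => j _; rewrite !ffunE scalerBr.
Qed.

Lemma char_adjoint_mx_actR (Y : lmodType R^c) a b (M : 'I_a -> 'I_b -> R) :
  char_adjoint (@mx_actR Y b a (mx_tr M)) (@mx_actL (dualR Y) a b M).
Proof.
move=> phi y; rewrite !tuple_charE.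
under eq_bigr => j _ do rewrite ffunE cdf_sum.
under [RHS]eq_bigr => i _ do rewrite ffunE cd_sumE.
by rewrite exchange_big.
Qed.

Lemma char_adjoint_mx_actL (X : lmodType R) a b (M : 'I_a -> 'I_b -> R) :
  char_adjoint (@mx_actL X a b M) (@mx_actR (dualL X) b a (mx_tr M)).
Proof.
move=> phi y; rewrite !tuple_charE.
under eq_bigr => j _ do rewrite ffunE cdf_sum.
under [RHS]eq_bigr => i _ do rewrite ffunE cd_sumE.
by rewrite exchange_big.
Qed.

Definition mx_image_sub (Y : lmodType R^c) n m
    (A : 'I_n -> 'I_n -> R) (C : 'I_m -> 'I_n -> R) :=
  forall y : tuple Y n, exists u : tuple Y m, mx_actR (mx_tr A) y = mx_actR (mx_tr C) u.

(* Image inclusion on Y is kernel inclusion on Y^+, i.e. image inclusion on Y^++. *)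
Lemma mx_image_sub_bidual (Y : lmodType R^c) n m A C :
  @mx_image_sub Y n m A C <-> @mx_image_sub (dualL (dualR Y)) n m A C.
Proof.
rewrite /mx_image_sub (image_sub_iff_adjoint_ker (@mx_actRB Y _ _ (mx_tr C))
  (@char_adjoint_mx_actR Y _ _ A) (@char_adjoint_mx_actR Y _ _ C)).
rewrite (ker_sub_iff_adjoint_image (@mx_actLB (dualR Y) _ _ C) (@mx_actLB (dualR Y) _ _ A)
  (@char_adjoint_mx_actL (dualR Y) _ _ C) (@char_adjoint_mx_actL (dualR Y) _ _ A)).
by split=> H y; have [u E] := H y; exists u.
Qed.

Lemma fin_projective_dual_basis (P : lmodType R^c) : fin_gen P -> projective_mod P ->
  exists n (v : 'I_n -> P) (k : {linear P -> {ffun 'I_n -> (R^c)^o}}),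
    forall p, p = \sum_i (k p i : R^c) *: v i.
Proof.
move=> [n [v v_gen]] P_proj.
pose comb (c : {ffun 'I_n -> (R^c)^o}) : P := \sum_i (c i : R^c) *: v i.
have combL : linear comb.
  move=> r c d; rewrite /comb scaler_sumr -big_split; apply: eq_bigr => i _ /=.
  by rewrite !ffunE scalerDl scalerA.
have comb_surj (p : P) : exists c, mkLinear combL c = p.
  have [c ->] := v_gen p; exists [ffun i => c i].
  by apply: eq_bigr => i _; rewrite ffunE.
have idL : linear (fun p : P => p) by [].
have [k Hk] := P_proj _ _ (mkLinear combL) (mkLinear idL) comb_surj.
by exists n, v, k => p; have := Hk p; rewrite /= /comb => ->.
Qed.

Lemma linear_dual_basis (P Y : lmodType R^c) n (v : 'I_n -> P) k (f : {linear P -> Y}) :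
  (forall p, p = \sum_i (k p i : R^c) *: v i) ->
  forall p, f p = \sum_i (k p i : R^c) *: f (v i).
Proof.
by move=> Hk p; rewrite {1}(Hk p) linear_sum; apply: eq_bigr => i _; rewrite linearZ.
Qed.

Lemma comb_dual_basis_lin (P Y : lmodType R^c) n
    (k : {linear P -> {ffun 'I_n -> (R^c)^o}})
    (y : tuple Y n) :
  linear (fun p : P => \sum_i (k p i : R^c) *: y i).
Proof.
move=> r p q; rewrite scaler_sumr -big_split; apply: eq_bigr => i _ /=.
by rewrite linearP !ffunE scalerDl scalerA.
Qed.

(* Through dual bases, the extension problem defining D_sigma becomes a matrix
   condition: A records the basis of P_{-1} in itself, C the image under sigma. *)
Lemma Dcat_mx_image_sub (P Q : lmodType R^c) (sigma : {linear P -> Q}) :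
  fin_gen P -> projective_mod P -> fin_gen Q -> projective_mod Q ->
  exists n m (A : 'I_n -> 'I_n -> R) (C : 'I_m -> 'I_n -> R),
    forall Y : lmodType R^c, Dcat sigma Y <-> @mx_image_sub Y n m A C.
Proof.
move=> fgP pP fgQ pQ.
have [n [v [k Hk]]] := fin_projective_dual_basis fgP pP.
have [m [w [l Hl]]] := fin_projective_dual_basis fgQ pQ.
exists n, m, (fun i j => k (v j) i), (fun i j => l (sigma (v j)) i) => Y; split.
  move=> YD y; have [g Hg] := YD (mkLinear (comb_dual_basis_lin k y)).
  exists [ffun i => g (w i)]; apply/ffunP => j; rewrite !ffunE.
  under [RHS]eq_bigr => i _ do rewrite ffunE.
  by rewrite -(linear_dual_basis g Hl) Hg.
move=> Ysub f; have [u Hu] := Ysub [ffun i => f (v i)].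
exists (mkLinear (comb_dual_basis_lin l u)) => p.
have sigma_v j : mkLinear (comb_dual_basis_lin l u) (sigma (v j)) = f (v j).
  have E := congr1 (fun z : tuple Y n => z j) Hu; rewrite /= !ffunE in E.
  rewrite /= (linear_dual_basis f Hk (v j)); symmetry.
  by apply: etrans _ E; apply: eq_bigr => i _; rewrite ffunE.
rewrite (linear_dual_basis sigma Hk p) linear_sum (linear_dual_basis f Hk p).
by apply: eq_bigr => j _; rewrite linearZ sigma_v.
Qed.

End Presentations.

(** * Direct sums *)

Section DirectSum.
Variables (R : pzRingType) (I : Type) (P : I -> lmodType R^c).

Definition index : Type := I.
HB.instance Definition _ := gen_eqMixin index.
HB.instance Definition _ := gen_choiceMixin index.

Definition fin_support (f : forall i : index, P i) :=
  exists l : seq index, forall i, f i != 0 -> i \in l.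

Definition dsum : Type := {f : forall i : index, P i | fin_support f}.
HB.instance Definition _ := gen_eqMixin dsum.
HB.instance Definition _ := gen_choiceMixin dsum.

Lemma dsum_ext (f g : dsum) : (forall i, sval f i = sval g i) -> f = g.
Proof.
case: f g => [f Hf] [g Hg] /= fg.
by apply: eq_exist; apply: functional_extensionality_dep.
Qed.

Lemma fin_support0 : fin_support (fun i => 0).
Proof. by exists [::] => i; rewrite eqxx. Qed.

Lemma fin_supportD (f g : forall i : index, P i) :
  fin_support f -> fin_support g -> fin_support (fun i => f i + g i).
Proof.
move=> [l1 H1] [l2 H2]; exists (l1 ++ l2) => i; rewrite mem_cat.
have [->|/H1 ->//] := eqVneq (f i) 0.
by rewrite add0r => /H2 ->; rewrite orbT.
Qed.

Lemma fin_supportN (f : forall i : index, P i) :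
  fin_support f -> fin_support (fun i => - f i).
Proof. by move=> [l H]; exists l => i; rewrite oppr_eq0; apply: H. Qed.

Lemma fin_supportZ r (f : forall i : index, P i) :
  fin_support f -> fin_support (fun i => r *: f i).
Proof.
move=> [l H]; exists l => i; have [->|/H //] := eqVneq (f i) 0.
by rewrite scaler0 eqxx.
Qed.

Definition dsum0 : dsum := exist _ _ fin_support0.
Definition dsum_add (f g : dsum) : dsum := exist _ _ (fin_supportD (svalP f) (svalP g)).
Definition dsum_opp (f : dsum) : dsum := exist _ _ (fin_supportN (svalP f)).
Definition dsum_scale (r : R^c) (f : dsum) : dsum := exist _ _ (fin_supportZ r (svalP f)).

Lemma dsum_addA : associative dsum_add.
Proof. by move=> f g h; apply: dsum_ext => i /=; rewrite addrA. Qed.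
Lemma dsum_addC : commutative dsum_add.
Proof. by move=> f g; apply: dsum_ext => i /=; rewrite addrC. Qed.
Lemma dsum_add0 : left_id dsum0 dsum_add.
Proof. by move=> f; apply: dsum_ext => i /=; rewrite add0r. Qed.
Lemma dsum_addN : left_inverse dsum0 dsum_opp dsum_add.
Proof. by move=> f; apply: dsum_ext => i /=; rewrite addNr. Qed.
HB.instance Definition _ :=
  GRing.isZmodule.Build dsum dsum_addA dsum_addC dsum_add0 dsum_addN.

Lemma dsum_scaleA a b (f : dsum) : dsum_scale a (dsum_scale b f) = dsum_scale (a * b) f.
Proof. by apply: dsum_ext => i /=; rewrite scalerA. Qed.
Lemma dsum_scale1 : left_id 1 dsum_scale.
Proof. by move=> f; apply: dsum_ext => i /=; rewrite scale1r. Qed.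
Lemma dsum_scaleDr : right_distributive dsum_scale +%R.
Proof. by move=> a f g; apply: dsum_ext => i /=; rewrite scalerDr. Qed.
Lemma dsum_scaleDl (f : dsum) : {morph dsum_scale^~ f : a b / a + b}.
Proof. by move=> a b; apply: dsum_ext => i /=; rewrite scalerDl. Qed.
HB.instance Definition _ :=
  GRing.Zmodule_isLmodule.Build R^c dsum
    dsum_scaleA dsum_scale1 dsum_scaleDr dsum_scaleDl.

Lemma dsum_sumE (T : Type) (r : seq T) (F : T -> dsum) k :
  sval (\sum_(i <- r) F i) k = \sum_(i <- r) sval (F i) k.
Proof. by elim: r => [|a r IH]; rewrite ?big_nil // !big_cons -IH. Qed.

Definition dsum_supp (f : dsum) : seq index := undup (projT1 (cid (svalP f))).

Lemma dsum_supp_uniq f : uniq (dsum_supp f). Proof. exact: undup_uniq. Qed.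

Lemma dsum_supp_cover (f : dsum) i : sval f i != 0 -> i \in dsum_supp f.
Proof. by rewrite mem_undup; case: (cid (svalP f)) => l /= H; apply: H. Qed.

Definition dsum_in_fun (j : index) (p : P j) (i : index) : P i :=
  if pselect (j = i) is left e then eq_rect j P p i e else 0.

Lemma dsum_in_fun_at (j : index) (p : P j) : dsum_in_fun p j = p.
Proof.
rewrite /dsum_in_fun; case: pselect => [e|[]] //.
by rewrite (Prop_irrelevance e erefl).
Qed.

Lemma dsum_in_fun_ne (j : index) (p : P j) i : j <> i -> dsum_in_fun p i = 0.
Proof. by rewrite /dsum_in_fun; case: pselect. Qed.

Lemma fin_support_in (j : index) (p : P j) : fin_support (dsum_in_fun p).
Proof.
exists [:: j] => i; rewrite /dsum_in_fun; case: pselect => [e _|_]; last by rewrite eqxx.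
by rewrite -e mem_seq1 eqxx.
Qed.

Lemma dsum_in_lin (j : index) :
  linear (fun p : P j => exist _ _ (fin_support_in p) : dsum).
Proof.
move=> r p q; apply: dsum_ext => i /=; rewrite /dsum_in_fun.
by case: pselect => [e|_]; [case: i / e | rewrite scaler0 addr0].
Qed.

Definition dsum_in (j : index) := mkLinear (@dsum_in_lin j).

Lemma dsum_inE j p i : sval (dsum_in j p) i = dsum_in_fun p i. Proof. by []. Qed.

Lemma dsum_decomp (f : dsum) : f = \sum_(i <- dsum_supp f) dsum_in i (sval f i).
Proof.
apply: dsum_ext => k; rewrite dsum_sumE.
have [kl|kNl] := boolP (k \in dsum_supp f).
  rewrite (bigD1_seq k) ?dsum_supp_uniq // dsum_inE dsum_in_fun_at big1 /= ?addr0 //.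
  by move=> i ik; rewrite dsum_in_fun_ne // => E; rewrite E eqxx in ik.
rewrite big_seq big1; first by apply: contraNeq kNl; apply: dsum_supp_cover.
by move=> i il; rewrite dsum_inE dsum_in_fun_ne // => E; rewrite -E il in kNl.
Qed.

Section Copair.
Variables (Y : lmodType R^c) (g : forall i : index, {linear P i -> Y}).

Definition copair_fun (f : dsum) : Y := \sum_(i <- dsum_supp f) g i (sval f i).

Lemma copair_funE f l : uniq l -> (forall i, sval f i != 0 -> i \in l) ->
  copair_fun f = \sum_(i <- l) g i (sval f i).
Proof.
move=> l_uniq l_cover.
have drop0 l' : \sum_(i <- l') g i (sval f i)
                = \sum_(i <- l' | sval f i != 0) g i (sval f i).
  by rewrite [RHS]big_mkcond; apply: eq_bigr => i _; case: eqP => [->|]; rewrite ?linear0.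
rewrite /copair_fun !drop0 -!(big_filter _ (fun i => sval f i != 0)).
apply: perm_big; apply: uniq_perm; rewrite ?filter_uniq ?dsum_supp_uniq //.
move=> i; rewrite !mem_filter; have [//|nz] := eqVneq (sval f i) 0.
by rewrite l_cover ?dsum_supp_cover.
Qed.

Lemma copair_lin : linear copair_fun.
Proof.
move=> r f f'.
pose l := undup (dsum_supp f ++ dsum_supp f' ++ dsum_supp (r *: f + f')).
rewrite !(@copair_funE _ l) ?undup_uniq //;
  try by move=> i /dsum_supp_cover; rewrite /l mem_undup !mem_cat => ->; rewrite ?orbT.
by rewrite scaler_sumr -big_split; apply: eq_bigr => i _ /=; rewrite linearP.
Qed.

Definition copair := mkLinear copair_lin.

Lemma copairE f l : uniq l -> (forall i, sval f i != 0 -> i \in l) ->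
  copair f = \sum_(i <- l) g i (sval f i).
Proof. exact: copair_funE. Qed.

End Copair.

Lemma dsum_projective : (forall i, projective_mod (P i)) -> projective_mod dsum.
Proof.
move=> P_proj M N g f g_surj.
have lift i : exists h : {linear P i -> M}, forall p, g (h p) = f (dsum_in i p).
  exact: (P_proj i _ _ g (f \o dsum_in i)).
pose h i := projT1 (cid (lift i)).
exists (copair h) => F.
rewrite (copairE h (dsum_supp_uniq F) (@dsum_supp_cover F)) linear_sum.
rewrite [in RHS](dsum_decomp F) linear_sum.
by apply: eq_bigr => i _; rewrite /h; case: (cid (lift i)) => hi /= ->.
Qed.

End DirectSum.

Section DirectSumMap.
Variables (R : pzRingType) (I : Type) (P Q : I -> lmodType R^c).
Variable s : forall i, {linear P i -> Q i}.

Lemma fin_support_map (F : dsum P) : fin_support (fun i : index I => s i (sval F i)).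
Proof.
case: (svalP F) => l H; exists l => i.
by have [->|/H //] := eqVneq (sval F i) 0; rewrite linear0 eqxx.
Qed.

Lemma dsum_map_lin : linear (fun F => exist _ _ (fin_support_map F) : dsum Q).
Proof. by move=> r F G; apply: dsum_ext => i /=; rewrite linearP. Qed.

Definition dsum_map := mkLinear dsum_map_lin.

Lemma dsum_map_in i p : dsum_map (dsum_in P i p) = dsum_in Q i (s i p).
Proof.
apply: dsum_ext => k; rewrite /= /dsum_in_fun.
by case: pselect => [e|_]; [case: k / e | rewrite linear0].
Qed.

Lemma Dcat_dsum_map (Y : lmodType R^c) : Dcat dsum_map Y <-> forall i, Dcat (s i) Y.
Proof.
split=> [YD i f | YD f].
  have projL : linear (fun F : dsum P => sval F i) by [].
  have [G HG] := YD (f \o mkLinear projL).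
  exists (G \o dsum_in Q i) => p.
  rewrite -[LHS]/(G (dsum_in Q i (s i p))) -dsum_map_in HG.
  by rewrite -[LHS]/(f (sval (dsum_in P i p) i)) dsum_inE dsum_in_fun_at.
have ext i : exists g : {linear Q i -> Y}, forall p, g (s i p) = f (dsum_in P i p).
  exact: (YD i (f \o dsum_in P i)).
pose g i := projT1 (cid (ext i)).
exists (copair g) => F.
rewrite (copairE g (dsum_supp_uniq F)); last first.
  move=> i /= nz; apply: dsum_supp_cover; apply: contraNneq nz => ->.
  by rewrite linear0.
rewrite [in RHS](dsum_decomp F) linear_sum.
by apply: eq_bigr => i _; rewrite /g; case: (cid (ext i)) => gi /= ->.
Qed.

End DirectSumMap.

(** * The duality between D_sigma and C_{sigma^+} *)

Section Duality.
Variable R : pzRingType.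

Lemma Tcat_Dcat_dualL (P Q : lmodType R^c) (sigma : {linear P -> Q}) (X : lmodType R) :
  Tcat sigma X <-> Dcat sigma (dualL X).
Proof. by rewrite Tcat_Ccat_dualmapR Ccat_dualmapR_Dcat_dualL. Qed.

Lemma Dcat_fin_projective_bidual (P Q : lmodType R^c) (sigma : {linear P -> Q}) :
  fin_gen P -> projective_mod P -> fin_gen Q -> projective_mod Q ->
  forall Y : lmodType R^c, Dcat sigma Y <-> Dcat sigma (dualL (dualR Y)).
Proof.
move=> fgP pP fgQ pQ Y.
have [n [m [A [C DC]]]] := Dcat_mx_image_sub sigma fgP pP fgQ pQ.
by rewrite !DC mx_image_sub_bidual.
Qed.

Lemma finite_type_Dcat_Ccat_dual (P Q : lmodType R^c) (sigma : {linear P -> Q}) :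
  finite_type sigma ->
  forall Y : lmodType R^c, Dcat sigma Y <-> Ccat (dualmapR sigma) (dualR Y).
Proof.
move=> [I [Ps [Qs [s [s_fin sD]]]]] Y.
rewrite Ccat_dualmapR_Dcat_dualL !sD.
have s_bidual i : Dcat (s i) Y <-> Dcat (s i) (dualL (dualR Y)).
  by have [? [? [? ?]]] := s_fin i; apply: Dcat_fin_projective_bidual.
by split=> H i; apply/s_bidual.
Qed.

Lemma cofinite_type_dualmapR (E0 E1 : lmodType R) (lambda : {linear E0 -> E1}) :
  cofinite_type lambda ->
  exists (P Q : lmodType R^c) (sigma : {linear P -> Q}),
    [/\ projective_mod P, projective_mod Q, finite_type sigma &
        forall X : lmodType R, Ccat lambda X <-> Ccat (dualmapR sigma) X].
Proof.
move=> [I [P [Q [s [s_fin lambdaC]]]]].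
exists (dsum P), (dsum Q), (dsum_map s); split.
- by apply: dsum_projective => i; have [_ [? _]] := s_fin i.
- by apply: dsum_projective => i; have [_ [_ [_ ?]]] := s_fin i.
- by exists I, P, Q, s; split => // Y; apply: Dcat_dsum_map.
move=> X; rewrite lambdaC Ccat_dualmapR_Dcat_dualL Dcat_dsum_map.
by split=> H i; apply/Tcat_Dcat_dualL.
Qed.

Lemma dualmapR_cofinite_type (E0 E1 : lmodType R) (lambda : {linear E0 -> E1})
    (P Q : lmodType R^c) (sigma : {linear P -> Q}) :
  finite_type sigma ->
  (forall X : lmodType R, Ccat lambda X <-> Ccat (dualmapR sigma) X) ->
  cofinite_type lambda.
Proof.
move=> [I [Ps [Qs [s [s_fin sD]]]]] lambdaC.
exists I, Ps, Qs, s; split => // X.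
rewrite lambdaC Ccat_dualmapR_Dcat_dualL sD.
by split=> H i; apply/Tcat_Dcat_dualL.
Qed.

End Duality.

Theorem lemma3p2 (R : pzRingType) :
  (forall (Pm1 P0 : lmodType R^c) (sigma : {linear Pm1 -> P0}),
     projective_mod Pm1 -> projective_mod P0 ->
     [/\ injective_mod (dualR P0) /\ injective_mod (dualR Pm1),
         (forall X : lmodType R,
            Tcat sigma X <-> Ccat (dualmapR sigma) X),
         (forall X : lmodType R,
            Ccat (dualmapR sigma) X <-> Dcat sigma (dualL X))
       & finite_type sigma ->
         forall Y : lmodType R^c,
           Dcat sigma Y <-> Ccat (dualmapR sigma) (dualR Y)]) /\
  (forall (E0 E1 : lmodType R) (lambda : {linear E0 -> E1}),
     injective_mod E0 -> injective_mod E1 ->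
     (cofinite_type lambda <->
      exists (Pm1 P0 : lmodType R^c) (sigma : {linear Pm1 -> P0}),
        [/\ projective_mod Pm1, projective_mod P0, finite_type sigma &
            forall X : lmodType R,
              Ccat lambda X <-> Ccat (dualmapR sigma) X])).
Proof.
split=> [Pm1 P0 sigma Pm1_proj P0_proj | E0 E1 lambda _ _].
  split; first by split; apply: dualR_injective.
  - exact: Tcat_Ccat_dualmapR.
  - exact: Ccat_dualmapR_Dcat_dualL.
  - exact: finite_type_Dcat_Ccat_dual.
split; first exact: cofinite_type_dualmapR.
move=> [Pm1 [P0 [sigma [_ _ sigma_fin lambdaC]]]].
exact: dualmapR_cofinite_type lambdaC.
Qed.
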